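(* An ample class $C\subseteq 2^X$ admits a corner peeling if and only if there exists an acyclic orientation of the edges of $G(C)$ that is a unique sink orientation.
   Context: A cube of $2^X$ is $\{T\cup Z:Z\subseteq Y\}$ with $Y\subseteq X$, $T\subseteq X\setminus Y$, support $\mathrm{supp}=Y$; a cube of $C$ is one contained in $C$. $Y$ is shattered by $C$ if $\{c\cap Y:c\in C\}=2^Y$; $C$ is ample if every shattered set is the support of a cube of $C$. A corner of $C$ is a concept lying in exactly one inclusion-maximal cube of $C$. A corner peeling is an ordering $c_1,\dots,c_m$ of $C$ such that each $c_i$ is a corner of $\{c_1,\dots,c_i\}$. $G(C)$ is the graph on $C$ with an $x$-edge $cc'$ whenever $c\Delta c'=\{x\}$. For an orientation $o$ of $G(C)$, the out-map $r_o(c)$ is the set of $x$ such that the $x$-edge at $c$ is directed away from $c$. $o$ is a unique sink orientation if (C1) for every $c$, the cube of $2^X$ with support $r_o(c)$ containing $c$ is contained in $C$, and (C2) every cube of $C$ contains exactly one vertex that is a sink of $o$ restricted to the edges of that cube. *)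

From mathcomp Require Import all_boot.
Set Implicit Arguments. Unset Strict Implicit. Unset Printing Implicit Defensive.

(* Ground set X is the finite type T; concepts are elements of {set T};
   a concept class C is a {set {set T}}. *)
Section Ample.
Variable T : finType.
Implicit Types (C Q : {set {set T}}) (c d A Y : {set T}) (x : T).

(* The cube of 2^X with support Y and base A (A disjoint from Y):
   { A :|: Z | Z \subset Y }. *)
Definition cube A Y : {set {set T}} := [set A :|: Z | Z in powerset Y].

Definition is_cube Q : Prop :=
  exists A Y, [disjoint A & Y] /\ Q = cube A Y.

Definition cube_of C Q : Prop := is_cube Q /\ Q \subset C.

Definition shatters C Y : bool := [set c :&: Y | c in C] == powerset Y.

Definition ample C : Prop :=
  forall Y, shatters C Y -> exists A, [disjoint A & Y] /\ cube A Y \subset C.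

Definition max_cube C Q : Prop :=
  cube_of C Q /\ forall Q', cube_of C Q' -> Q \subset Q' -> Q' = Q.

Definition corner C c : Prop :=
  c \in C /\ exists Q, max_cube C Q /\ c \in Q /\
                       forall Q', max_cube C Q' -> c \in Q' -> Q' = Q.

Definition corner_peeling C (s : seq {set T}) : Prop :=
  uniq s /\ [set c in s] = C /\
  forall i, i < size s -> corner [set c in take i.+1 s] (nth set0 s i).

Definition has_corner_peeling C : Prop := exists s, corner_peeling C s.

Definition flip c x : {set T} := if x \in c then c :\ x else x |: c.

Definition adjacent c d : bool := #|(c :\: d) :|: (d :\: c)| == 1.

(* An orientation o of G(C) is given by a relation; o c d means that the
   edge cd is directed from c to d.  Every edge of G(C) receives exactly
   one direction. *)
Definition orientation C (o : rel {set T}) : Prop :=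
  forall c d, c \in C -> d \in C -> adjacent c d -> o c d != o d c.

Definition arc C (o : rel {set T}) : rel {set T} :=
  fun c d => [&& c \in C, d \in C, adjacent c d & o c d].

Definition acyclic C (o : rel {set T}) : Prop :=
  forall c d, arc C o c d -> ~~ connect (arc C o) d c.

Definition outmap C (o : rel {set T}) c : {set T} :=
  [set x | (flip c x \in C) && o c (flip c x)].

Definition sink_in (o : rel {set T}) Q v : bool :=
  (v \in Q) && [forall u in Q, adjacent v u ==> ~~ o v u].

Definition USO C (o : rel {set T}) : Prop :=
  (forall c, c \in C -> cube (c :\: outmap C o c) (outmap C o c) \subset C) /\
  (forall Q, cube_of C Q -> #|[set v | sink_in o Q v]| = 1).

End Ample.

(* From a corner peeling, orient every edge of G(C) towards the concept peeled
   earlier.  A corner's unique maximal cube contains all its earlier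
   neighbours, which gives (C1).  For (C2), the part of a cube lying in a
   prefix of the peeling stays connected in G(C), because removing a corner
   keeps squares closed; so a sink of the cube, having no earlier neighbour in
   it, is its earliest element.
   Conversely, list C in a topological order of an acyclic unique sink
   orientation.  Reversing the edges of one direction class preserves (C2),
   hence so does reversing all edges, and every cube of C has a unique source.
   The cube at c spanned by its out-map lies in C by (C1); c and the latest
   element of that cube are both sources of it, so it lies in the prefix
   ending at c, where it is the greatest cube containing c: c is a corner. *)

From Pilot Require Import Defs.
From mathcomp Require Import all_boot.
From Stdlib Require Import Classical.
Set Implicit Arguments. Unset Strict Implicit. Unset Printing Implicit Defensive.

Section Hypercube.
Variable T : finType.
Implicit Types (D Q : {set {set T}}) (c d A Y R : {set T}) (x y z : T).

Lemma in_flip c x z : (z \in flip c x) = (z == x) (+) (z \in c).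
Proof.
by rewrite /flip; case: (boolP (x \in c)) => xc; rewrite !inE;
  case: eqVneq => [->|] //=; rewrite xc.
Qed.

Lemma flipK c x : flip (flip c x) x = c.
Proof. by apply/setP => z; rewrite !in_flip addbA addbb. Qed.

Lemma flipC c x y : flip (flip c x) y = flip (flip c y) x.
Proof. by apply/setP => z; rewrite !in_flip addbCA. Qed.

Lemma flip_neq c x : flip c x != c.
Proof. by apply/eqP => /setP /(_ x); rewrite in_flip eqxx; case: (x \in c). Qed.

Lemma flip_inj c : injective (flip c).
Proof.
move=> x y /setP /(_ x); rewrite !in_flip eqxx.
by case: eqVneq => //; case: (x \in c).
Qed.

Lemma adjacentP c d : reflect (exists x, d = flip c x) (adjacent c d).
Proof.
apply: (iffP cards1P) => [[x /setP dcx]|[x ->]]; exists x; apply/setP => z.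
  by move: (dcx z); rewrite in_flip !inE; case: eqVneq; case: (z \in c); case: (z \in d).
by rewrite !inE in_flip; case: eqVneq; case: (z \in c).
Qed.

Lemma adjacent_flip c x : adjacent c (flip c x).
Proof. by apply/adjacentP; exists x. Qed.

Lemma adjacent_sym c d : adjacent c d = adjacent d c.
Proof. by rewrite /adjacent setUC. Qed.

Lemma adjacent_neq c d : adjacent c d -> c != d.
Proof. by move=> /adjacentP [x ->]; rewrite eq_sym flip_neq. Qed.

Definition cube_at c Y := cube (c :\: Y) Y.

Lemma mem_cube A Y d : [disjoint A & Y] -> (d \in cube A Y) = (d :\: Y == A).
Proof.
move=> disAY; apply/imsetP/eqP => [[Z]|<-].
  rewrite inE => ZY ->; apply/setP => z; rewrite !inE.
  case: (boolP (z \in Y)) => [zY|zNY] /=; first by rewrite (disjointFl disAY zY).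
  by rewrite (negPf (contraNN (subsetP ZY z) zNY)) orbF.
exists (d :&: Y); first by rewrite inE subsetIr.
by apply/setP => z; rewrite !inE; case: (z \in Y); case: (z \in d).
Qed.

Lemma mem_cube_at c Y d : (d \in cube_at c Y) = (d :\: Y == c :\: Y).
Proof. by rewrite mem_cube // disjoint_subset; apply/subsetP => z; rewrite !inE => /andP[]. Qed.

Lemma cube_at_id c Y : c \in cube_at c Y.
Proof. by rewrite mem_cube_at. Qed.

Lemma cube_at_eq c d Y : d \in cube_at c Y -> cube_at d Y = cube_at c Y.
Proof. by rewrite mem_cube_at /cube_at => /eqP ->. Qed.

Lemma cube_atE A Y c : [disjoint A & Y] -> c \in cube A Y -> cube A Y = cube_at c Y.
Proof. by move=> disAY; rewrite mem_cube // => /eqP <-. Qed.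

Lemma flip_cube_at c Y x : (flip c x \in cube_at c Y) = (x \in Y).
Proof.
rewrite mem_cube_at; apply/eqP/idP => [/setP /(_ x)|xY].
  by rewrite !inE in_flip eqxx; case: (x \in Y); case: (x \in c).
by apply/setP => z; rewrite !inE in_flip; case: eqVneq => [->|]; rewrite ?xY.
Qed.

Lemma mem_flip_cube_at c Y d x :
  d \in cube_at c Y -> (flip d x \in cube_at c Y) = (x \in Y).
Proof. by move/cube_at_eq <-; apply: flip_cube_at. Qed.

Lemma cube_at_subset c Y R : Y \subset R -> cube_at c Y \subset cube_at c R.
Proof.
move=> YR; apply/subsetP => d; rewrite !mem_cube_at => /eqP dcY.
apply/eqP/setP => z; rewrite !inE; case: (boolP (z \in R)) => //= zNR.
have zNY : z \notin Y := contraNN (subsetP YR z) zNR.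
by move/setP: dcY => /(_ z); rewrite !inE zNY.
Qed.

Lemma cube_of_cube_at D c Y : cube_at c Y \subset D -> cube_of D (cube_at c Y).
Proof.
split=> //; exists (c :\: Y), Y; split=> //.
by rewrite disjoint_subset; apply/subsetP => z; rewrite !inE => /andP[].
Qed.

Lemma cube_ofP D Q c : cube_of D Q -> c \in Q -> exists2 Y, Q = cube_at c Y & Q \subset D.
Proof. by move=> [[A [Y [disAY ->]]] QD] cQ; exists Y => //; apply: cube_atE. Qed.

Lemma cube_of_nonempty D Q : cube_of D Q -> exists c, c \in Q.
Proof.
move=> [[A [Y [disAY ->]]] _]; exists A; rewrite mem_cube //.
apply/eqP/setP => z; rewrite !inE.
by case: (boolP (z \in A)) => [zA|]; rewrite ?andbF ?(disjointFr disAY zA).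
Qed.

Lemma cube_at1 c x d : d \in cube_at c [set x] -> d = c \/ d = flip c x.
Proof.
rewrite mem_cube_at => /eqP /setP dcx.
have [xdc|xdc] := eqVneq (x \in d) (x \in c); [left|right]; apply/setP => z;
  move: (dcx z); rewrite !inE ?in_flip; case: eqVneq => [->|] //= _;
  by move: xdc; case: (x \in c); case: (x \in d).
Qed.

Lemma cube_at_setD1 c Y x d : x \in Y ->
  (d \in cube_at c (Y :\ x)) = (d \in cube_at c Y) && ((x \in d) == (x \in c)).
Proof.
move=> xY; rewrite !mem_cube_at; apply/eqP/andP => [dcYx|[/eqP dcY /eqP xdc]].
  split; last by move/setP: dcYx => /(_ x); rewrite !inE eqxx xY /= => ->.
  apply/eqP/setP => z; move/setP: dcYx => /(_ z); rewrite !inE.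
  by case: eqVneq => [->|] //=; rewrite xY.
apply/setP => z; move/setP: dcY => /(_ z); rewrite !inE.
by case: eqVneq => [->|] //= _; rewrite xdc.
Qed.


Lemma exists_max_cube D Q : cube_of D Q -> exists2 M, max_cube D M & Q \subset M.
Proof.
elim: {Q}#|~: Q|.+1 {-2}Q (ltnSn #|~: Q|) => // n IH Q ltQn QD.
have [[Q' [Q'D ltQQ']]|noQ'] := classic (exists Q', cube_of D Q' /\ Q \proper Q').
  have ltQ'n : #|~: Q'| < n.
    by rewrite -ltnS (leq_trans _ ltQn) // ltnS proper_card // properC.
  have [M maxM Q'M] := IH Q' ltQ'n Q'D.
  by exists M; last exact: subset_trans (proper_sub ltQQ') Q'M.
exists Q => //; split=> // Q' Q'D QQ'; apply/eqP; apply: contraT => Q'Q; exfalso.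
by apply: noQ'; exists Q'; rewrite properEneq QQ' andbT eq_sym.
Qed.

Lemma corner_cube D c :
  corner D c -> exists2 Y, cube_at c Y \subset D & forall x, flip c x \in D -> x \in Y.
Proof.
move=> [cD [Q [[QD _] [cQ uniqQ]]]].
have [Y eQ QsubD] := cube_ofP QD cQ.
exists Y => [|x cxD]; first by rewrite -eQ.
have edgeD : cube_at c [set x] \subset D by apply/subsetP => d /cube_at1 [->|->].
have [M maxM edgeM] := exists_max_cube (cube_of_cube_at edgeD).
have eMQ : M = Q := uniqQ M maxM (subsetP edgeM c (cube_at_id _ _)).
have : flip c x \in M by apply: (subsetP edgeM); rewrite flip_cube_at set11.
by rewrite eMQ eQ flip_cube_at.
Qed.

Lemma corner_square D c x y :
  corner D c -> flip c x \in D -> flip c y \in D -> flip (flip c x) y \in D.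
Proof.
move=> /corner_cube [Y cYD nbhdY] /nbhdY xY /nbhdY yY; apply: (subsetP cYD).
by rewrite mem_flip_cube_at // flip_cube_at.
Qed.

Lemma corner_of_greatest_cube D c Q :
  cube_of D Q -> c \in Q -> (forall Q', cube_of D Q' -> c \in Q' -> Q' \subset Q) ->
  corner D c.
Proof.
move=> QD cQ greatestQ; split; first exact: subsetP (proj2 QD) c cQ.
exists Q; split; first split=> // Q' Q'D QQ'.
  by apply/eqP; rewrite eqEsubset QQ' andbT greatestQ // (subsetP QQ').
by split=> // Q' [Q'D maxQ'] cQ'; symmetry; apply: maxQ' QD (greatestQ Q' Q'D cQ').
Qed.

End Hypercube.

Section Reversal.
Variable T : finType.
Implicit Types (C Q : {set {set T}}) (c d u v Y : {set T}) (x y : T) (p : rel {set T}).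

Definition unique_sinks C p := forall Q, cube_of C Q -> #|[set v | sink_in p Q v]| = 1.

Lemma forall_in_setD1 Y x (P : pred T) :
  x \in Y -> [forall y in Y, P y] = [forall y in Y :\ x, P y] && P x.
Proof.
move=> xY; apply/forall_inP/andP => [PY|[/forall_inP PYx Px] y yY].
  by split; [apply/forall_inP => y /setD1P [_ /PY] | apply: PY].
by case: (eqVneq y x) => [->|yx] //; apply: PYx; rewrite !inE yx.
Qed.

Lemma sink_in_cube_at p c Y v : v \in cube_at c Y ->
  sink_in p (cube_at c Y) v = [forall y in Y, ~~ p v (flip v y)].
Proof.
move=> vQ; rewrite /sink_in vQ -(cube_at_eq vQ) /=.
apply/forall_inP/forall_inP => [vsink y yY|vsink u uQ].
  by have := vsink (flip v y); rewrite flip_cube_at adjacent_flip; apply.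
by apply/implyP => /adjacentP [y uy]; move: uQ; rewrite uy flip_cube_at => /vsink.
Qed.

Lemma sinks_cube_at p c Y :
  [set v | sink_in p (cube_at c Y) v] =
  [set v in cube_at c Y | [forall y in Y, ~~ p v (flip v y)]].
Proof.
apply/setP => v; rewrite !inE; case: (boolP (v \in cube_at c Y)) => vQ.
  exact: sink_in_cube_at.
by rewrite /sink_in (negPf vQ).
Qed.

Lemma card_cube_at_split c Y x (P : pred {set T}) : x \in Y ->
  #|[set v in cube_at c Y | P v]| =
  #|[set v in cube_at c (Y :\ x) | P v]| + #|[set v in cube_at (flip c x) (Y :\ x) | P v]|.
Proof.
move=> xY; have cxQ : flip c x \in cube_at c Y by rewrite flip_cube_at.
rewrite -(cardsID [set v : {set T} | (x \in v) == (x \in c)]); congr (_ + _); apply: eq_card => v.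
  by rewrite !inE cube_at_setD1 // andbAC.
rewrite !inE cube_at_setD1 // (cube_at_eq cxQ) in_flip eqxx.
by case: (x \in v); case: (x \in c); rewrite ?andbT ?andbF.
Qed.

Lemma orientation_rev C p c y : orientation C p -> c \in C -> flip c y \in C ->
  p (flip c y) c = ~~ p c (flip c y).
Proof.
move=> op cC cyC; have := op _ _ cC cyC (adjacent_flip c y).
by case: (p c _); case: (p _ c).
Qed.

Definition reverse_dir x p : rel {set T} :=
  fun c d => if d == flip c x then p d c else p c d.

Lemma reverse_dir_flip x p c y :
  reverse_dir x p c (flip c y) = if y == x then p (flip c y) c else p c (flip c y).
Proof. by rewrite /reverse_dir (inj_eq (@flip_inj _ c)). Qed.

Lemma orientation_reverse_dir C p x : orientation C p -> orientation C (reverse_dir x p).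
Proof.
move=> op c d cC dC /adjacentP [y ed]; subst d.
have -> : reverse_dir x p (flip c y) c = if y == x then p c (flip c y) else p (flip c y) c.
  by rewrite -{2}(flipK c y) reverse_dir_flip flipK.
rewrite reverse_dir_flip; case: (y == x); [rewrite eq_sym|];
  by apply: op; rewrite ?adjacent_flip.
Qed.

Lemma unique_sinks_reverse_dir C p x :
  orientation C p -> unique_sinks C p -> unique_sinks C (reverse_dir x p).
Proof.
move=> op usp Q QC; have [c cQ] := cube_of_nonempty QC.
have [Y eQ QsubC] := cube_ofP QC cQ; subst Q; set Q := cube_at c Y.
have facetC d (Z : {set T}) : d \in Q -> Z \subset Y -> cube_of C (cube_at d Z).
  move=> dQ ZY; apply: cube_of_cube_at; apply: subset_trans QsubC.
  by rewrite -(cube_at_eq dQ) cube_at_subset.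
rewrite sinks_cube_at; have [xY|xNY] := boolP (x \in Y); last first.
  rewrite -(usp _ QC) sinks_cube_at; apply: eq_card => v; rewrite !inE; congr andb.
  apply: eq_forallb_in => y yY; rewrite reverse_dir_flip.
  by case: eqVneq => // eyx; rewrite -eyx yY in xNY.
(* A sink of Q is a sink of its facet orthogonal to x whose x-edge points
   inwards, and reversing the x-edges flips that last condition.  The sinks of
   the two facets number 2, hence so do the sinks of Q for p and for the
   reversal together. *)
pose P v := [forall y in Y :\ x, ~~ p v (flip v y)].
pose N v := p v (flip v x).
have facet_sinks d : d \in Q -> #|[set v in cube_at d (Y :\ x) | P v]| = 1.
  by move=> dQ; have := usp _ (facetC d _ dQ (subsetDl Y [set x])); rewrite sinks_cube_at.
have cardP : #|[set v in Q | P v]| = 2.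
  by rewrite (card_cube_at_split _ _ xY) !facet_sinks ?flip_cube_at ?cube_at_id.
have splitP : #|[set v in Q | P v]| =
              #|[set v in Q | P v && N v]| + #|[set v in Q | P v && ~~ N v]|.
  rewrite -(cardsID [set v | N v]); congr (_ + _); apply: eq_card => v;
  by rewrite !inE; case: (N v); rewrite ?andbT ?andbF.
have sinks_p : #|[set v in Q | P v && ~~ N v]| = 1.
  by rewrite -(usp _ QC) sinks_cube_at; apply: eq_card => v; rewrite !inE (forall_in_setD1 _ xY).
have -> : [set v in Q | [forall y in Y, ~~ reverse_dir x p v (flip v y)]] =
          [set v in Q | P v && N v].
  apply/setP => v; rewrite !inE; case: (boolP (v \in Q)) => //= vQ.
  have vxC : flip v x \in C by apply: (subsetP QsubC); rewrite mem_flip_cube_at.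
  rewrite (forall_in_setD1 _ xY) reverse_dir_flip eqxx.
  rewrite (orientation_rev op (subsetP QsubC v vQ) vxC) negbK.
  by congr andb; apply: eq_forallb_in => y; rewrite !inE reverse_dir_flip => /andP [/negPf ->].
by move: cardP; rewrite splitP sinks_p addn1 => -[->].
Qed.

Lemma reverse_dirs_flip s p c y : uniq s ->
  foldr reverse_dir p s c (flip c y) = if y \in s then p (flip c y) c else p c (flip c y).
Proof.
elim: s c y => //= x s IH c y /andP [xNs us]; rewrite reverse_dir_flip inE.
case: eqVneq => [->|_] /=; last exact: IH.
by have := IH (flip c x) x us; rewrite flipK (negPf xNs) => ->.
Qed.

Lemma unique_sinks_reverse_dirs C p s : orientation C p -> unique_sinks C p ->
  orientation C (foldr reverse_dir p s) /\ unique_sinks C (foldr reverse_dir p s).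
Proof.
move=> op usp; elim: s => //= x s [IHo IHu].
by split; [apply: orientation_reverse_dir | apply: unique_sinks_reverse_dir].
Qed.

Lemma unique_source C p c Y u v :
  orientation C p -> unique_sinks C p -> cube_at c Y \subset C ->
  u \in cube_at c Y -> [forall y in Y, p u (flip u y)] ->
  v \in cube_at c Y -> [forall y in Y, p v (flip v y)] -> u = v.
Proof.
move=> op usp QC uQ usrc vQ vsrc.
have [_ /(_ _ (cube_of_cube_at QC))] := unique_sinks_reverse_dirs (enum T) op usp.
move=> /eqP /cards1P [w sinks_w].
have sink_rev d : d \in cube_at c Y -> [forall y in Y, p d (flip d y)] ->
    d \in [set v | sink_in (foldr reverse_dir p (enum T)) (cube_at c Y) v].
  move=> dQ /forall_inP dsrc; rewrite inE sink_in_cube_at //; apply/forall_inP => y yY.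
  have dyC : flip d y \in C by apply: (subsetP QC); rewrite mem_flip_cube_at.
  rewrite reverse_dirs_flip ?enum_uniq // mem_enum.
  by rewrite (orientation_rev op (subsetP QC d dQ) dyC) negbK dsrc.
by move: (sink_rev u uQ usrc) (sink_rev v vQ vsrc); rewrite sinks_w !inE => /eqP -> /eqP ->.
Qed.

End Reversal.

Section Connectivity.
Variable T : finType.
Implicit Types (D S : {set {set T}}) (a b c d Y : {set T}) (x y : T).

Definition connected D := forall S, S \subset D -> S != set0 ->
  {in S & D, forall a b, adjacent a b -> b \in S} -> D \subset S.

Lemma cube_at_connected c Y : connected (cube_at c Y).
Proof.
move=> S SQ /set0Pn [a aS] closedS; have aQ := subsetP SQ a aS.
suff reachS n d : d \in cube_at c Y -> #|[set z | (z \in d) != (z \in a)]| = n -> d \in S.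
  by apply/subsetP => d dQ; apply: reachS dQ erefl.
elim: n d => [|n IH] d dQ.
  move/eqP; rewrite cards_eq0 => /eqP /setP da.
  suff -> : d = a by [].
  by apply/setP => z; move: (da z); rewrite !inE; case: (z \in d); case: (z \in a).
move=> card_da; have [x] : exists x, x \in [set z | (z \in d) != (z \in a)].
  by apply/set0Pn; rewrite -cards_eq0 card_da.
rewrite inE => xda.
have xY : x \in Y.
  apply: contraTT xda => xNY; move: dQ aQ; rewrite !mem_cube_at => /eqP dY /eqP aY.
  by move/setP: (etrans dY (esym aY)) => /(_ x); rewrite !inE xNY /= => ->; rewrite negbK.
have dxS : flip d x \in S.
  apply: IH; first by rewrite mem_flip_cube_at.
  have -> : [set z | (z \in flip d x) != (z \in a)] = [set z | (z \in d) != (z \in a)] :\ x.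
    apply/setP => z; rewrite !inE in_flip; case: (eqVneq z x) => [->|] //=.
    by move: xda; case: (x \in d); case: (x \in a).
  by move: card_da; rewrite (cardsD1 x) inE xda => -[].
by apply: closedS dxS dQ _; rewrite -{2}(flipK d x) adjacent_flip.
Qed.

Lemma cube_at_square c Y d x y : x != y ->
  flip d x \in cube_at c Y -> flip d y \in cube_at c Y -> flip (flip d x) y \in cube_at c Y.
Proof.
move=> xy dxQ dyQ; rewrite flipC mem_flip_cube_at //.
apply: contraTT dxQ => xNY; rewrite -(cube_at_eq dyQ) mem_cube_at.
apply/eqP => /setP /(_ x); rewrite !inE xNY !in_flip eqxx (negPf xy) /=.
by case: (x \in d).
Qed.

Lemma connected_setD1 D c : connected D ->
  (forall x y, x != y -> flip c x \in D -> flip c y \in D -> flip (flip c x) y \in D) ->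
  connected (D :\ c).
Proof.
move=> connD square S SDc S0 closedS; have SD := subset_trans SDc (subsetDl D [set c]).
have inDc b : b \in D -> b != c -> b \in D :\ c by move=> bD bc; rewrite !inE bc.
have [cD|cND] := boolP (c \in D); last first.
  apply: subset_trans (subsetDl D [set c]) _; apply: connD => // a b aS bD.
  by apply: closedS => //; rewrite !inE bD andbT; apply: contraNneq cND => <-.
suff DcS : D \subset c |: S.
  by apply/subsetP => d /setD1P [dc /(subsetP DcS)]; rewrite !inE (negPf dc).
have [/exists_inP [a aS ca]|noadj] := boolP [exists a in S, adjacent c a]; last first.
  apply: subset_trans (subsetUr [set c] S); apply: connD => // a' b a'S bD a'b.
  apply: closedS (a'S) (inDc b bD _) (a'b); apply: contraNneq noadj => ebc.
  by apply/exists_inP; exists a'; rewrite // -ebc adjacent_sym.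
apply: connD; first by rewrite subUset sub1set cD.
  by apply/set0Pn; exists c; rewrite setU11.
move=> a' b; rewrite !inE => a'cS bD a'b; case: (eqVneq b c) => //= bc.
case/orP: a'cS => [/eqP ea'|]; last by move/closedS; apply; rewrite ?inDc.
move: a'b ca; rewrite ea' => /adjacentP [y eb] /adjacentP [x ea]; subst a b.
have [<- //|xy] := eqVneq x y.
have wc : flip (flip c x) y != c.
  apply: contra_neq (xy) => e; apply: (@flip_inj _ c).
  by have := congr1 (fun d => flip d y) e; rewrite /= flipK => ->.
have wD := inDc _ (square x y xy (subsetP SD _ aS) bD) wc.
have wS : flip (flip c x) y \in S by apply: closedS aS wD (adjacent_flip _ _).
by apply: closedS wS (inDc _ bD bc) _; rewrite flipC -{2}(flipK (flip c y) x) adjacent_flip.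
Qed.

End Connectivity.

Section Peeling.
Variable T : finType.
Implicit Types (C Q : {set {set T}}) (c d e v : {set T}) (s : seq {set T}) (o : rel {set T}).

Definition prefix s i := [set c in take i s].

Lemma mem_prefix s i e : (e \in prefix s i) = (e \in s) && (index e s < i).
Proof.
rewrite inE; case: (boolP (e \in s)) => es /=; first exact: in_take.
by apply: contraNF es; apply: mem_take.
Qed.

Lemma prefix_size s : prefix s (size s) = [set c in s].
Proof. by rewrite /prefix take_size. Qed.

Lemma prefixS s i : uniq s -> i < size s -> prefix s i = prefix s i.+1 :\ nth set0 s i.
Proof.
move=> s_uniq lt_is; have := take_uniq i.+1 s_uniq.
rewrite /prefix (take_nth set0 lt_is) rcons_uniq => /andP [sNtake _].
apply/setP => e; rewrite !inE mem_rcons in_cons.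
by case: eqVneq => [->|] //=; rewrite (negPf sNtake).
Qed.

Lemma mem_enumeration C s c : [set c in s] = C -> (c \in C) = (c \in s).
Proof. by move=> <-; rewrite inE. Qed.

Lemma connect_index_decreasing (r : rel {set T}) s c d :
  (forall a b, r a b -> index b s < index a s) -> connect r c d -> index d s <= index c s.
Proof.
move=> decr /connectP [p rp ->]; elim: p c rp => //= e p IH c /andP [ce ep].
exact: leq_trans (IH e ep) (ltnW (decr _ _ ce)).
Qed.

Lemma acyclic_topological_order C o : acyclic C o ->
  exists s, [/\ uniq s, [set c in s] = C & forall c d, Defs.arc C o c d -> index d s < index c s].
Proof.
move=> acyc; pose reach c := #|[set d | connect (Defs.arc C o) c d]|.
have reach_arc c d : Defs.arc C o c d -> reach d < reach c.
  move=> cd; apply: proper_card; apply/properP; split.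
    by apply/subsetP => e; rewrite !inE; apply: connect_trans (connect1 cd).
  by exists c; rewrite !inE ?connect0 // (negPf (acyc _ _ cd)).
pose le := [rel c d | reach c <= reach d].
have le_total : total le by move=> c d; apply: leq_total.
have le_trans : transitive le by move=> c b d; apply: leq_trans.
exists (sort le (enum C)); split; first by rewrite sort_uniq enum_uniq.
  by apply/setP => c; rewrite inE mem_sort mem_enum.
move=> c d cd; rewrite ltnNge; apply: contraTN (reach_arc c d cd); rewrite -leqNgt.
have [cC dC _] := and3P cd.
have le_refl : reflexive le by move=> b; apply: leqnn.
apply: (sorted_leq_index le_trans le_refl (sort_sorted le_total _));
  by rewrite mem_sort mem_enum.
Qed.

Section AcyclicUSO.
Variables (C : {set {set T}}) (o : rel {set T}) (s : seq {set T}).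
Hypotheses (oC : orientation C o) (usoC : USO C o).
Hypotheses (s_uniq : uniq s) (sC : [set c in s] = C).
Hypothesis s_topo : forall c d, Defs.arc C o c d -> index d s < index c s.

Lemma arc_flip_index c x :
  c \in C -> flip c x \in C -> o (flip c x) c -> index c s < index (flip c x) s.
Proof.
by move=> cC cxC cxc; apply: s_topo; rewrite /Defs.arc cC cxC adjacent_sym adjacent_flip.
Qed.

Lemma outcube_sub_prefix c : c \in C -> cube_at c (outmap C o c) \subset prefix s (index c s).+1.
Proof.
move=> cC; have [C1 C2] := usoC; set R := outmap C o c; have QC := C1 c cC.
have [w wQ wmax] : exists2 w, w \in cube_at c R &
    forall d, d \in cube_at c R -> index d s <= index w s.
  by case: (arg_maxnP (fun d => index d s) (cube_at_id c R)) => w; exists w.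
have ewc : w = c.
  apply: (unique_source oC C2 QC wQ _ (cube_at_id c R)); last first.
    by apply/forall_inP => x; rewrite inE => /andP[].
  apply/forall_inP => x xR; have wxQ : flip w x \in cube_at c R by rewrite mem_flip_cube_at.
  have [wC wxC] := (subsetP QC w wQ, subsetP QC _ wxQ).
  rewrite -[o w _]negbK -(orientation_rev oC wC wxC); apply/negP => /(arc_flip_index wC wxC).
  by rewrite ltnNge wmax.
apply/subsetP => d dQ; rewrite mem_prefix ltnS -ewc wmax // andbT -(mem_enumeration _ sC).
exact: subsetP QC d dQ.
Qed.

Lemma prefix_cube_sub_outcube c Q : c \in C ->
  cube_of (prefix s (index c s).+1) Q -> c \in Q -> Q \subset cube_at c (outmap C o c).
Proof.
move=> cC QP cQ; have [Y -> QsubP] := cube_ofP QP cQ.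
apply: cube_at_subset; apply/subsetP => x xY.
have := subsetP QsubP (flip c x); rewrite flip_cube_at mem_prefix ltnS.
move=> /(_ xY) /andP [cxs cx_le].
have cxC : flip c x \in C by rewrite (mem_enumeration _ sC).
rewrite inE cxC -[o c _]negbK -(orientation_rev oC cC cxC).
by apply/negP => /(arc_flip_index cC cxC); rewrite ltnNge cx_le.
Qed.

Lemma topological_order_corner c : c \in C -> corner (prefix s (index c s).+1) c.
Proof.
move=> cC; apply: (@corner_of_greatest_cube _ _ _ (cube_at c (outmap C o c))).
- exact/cube_of_cube_at/outcube_sub_prefix.
- exact: cube_at_id.
- by move=> Q QP cQ; apply: prefix_cube_sub_outcube.
Qed.

Lemma topological_order_corner_peeling : corner_peeling C s.
Proof.
split=> //; split=> // i lt_is.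
have cC : nth set0 s i \in C by rewrite (mem_enumeration _ sC) mem_nth.
by have := topological_order_corner cC; rewrite index_uniq //; apply.
Qed.

End AcyclicUSO.

Lemma acyclic_USO_corner_peeling C o :
  orientation C o -> acyclic C o -> USO C o -> has_corner_peeling C.
Proof.
move=> oC acyc usoC; have [s [s_uniq sC s_topo]] := acyclic_topological_order acyc.
by exists s; apply: (topological_order_corner_peeling oC usoC).
Qed.

Definition peel_order s : rel {set T} := fun c d => index d s < index c s.

Section CornerPeeling.
Variables (C : {set {set T}}) (s : seq {set T}).
Hypotheses (s_uniq : uniq s) (sC : [set c in s] = C).
Hypothesis s_corner : forall i, i < size s -> corner (prefix s i.+1) (nth set0 s i).

Lemma peeling_corner c : c \in C -> corner (prefix s (index c s).+1) c.
Proof.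
rewrite (mem_enumeration _ sC) => cs.
by have := @s_corner (index c s); rewrite index_mem nth_index //; apply.
Qed.

Lemma prefix_sub i : prefix s i \subset C.
Proof. by apply/subsetP => e; rewrite mem_prefix (mem_enumeration _ sC) => /andP[]. Qed.

Lemma peel_order_orientation : orientation C (peel_order s).
Proof.
move=> c d cC dC cd; rewrite /peel_order.
have : index c s != index d s.
  apply: contra (adjacent_neq cd) => /eqP /index_inj -> //; by rewrite -(mem_enumeration _ sC).
by case: ltngtP.
Qed.

Lemma peel_order_acyclic : acyclic C (peel_order s).
Proof.
have decr a b : Defs.arc C (peel_order s) a b -> index b s < index a s by case/and4P.
by move=> c d cd; apply/negP => /(connect_index_decreasing decr); rewrite leqNgt decr.
Qed.

Lemma peel_order_outcube c : c \in C -> cube_at c (outmap C (peel_order s) c) \subset C.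
Proof.
move=> cC; have [Y cYP nbhdY] := corner_cube (peeling_corner cC).
apply: subset_trans (prefix_sub (index c s).+1); apply: subset_trans cYP.
apply: cube_at_subset; apply/subsetP => x; rewrite inE => /andP [cxC lt]; apply: nbhdY.
by rewrite mem_prefix -(mem_enumeration _ sC) cxC ltnS ltnW.
Qed.

Lemma prefix_cube_connected Q i : cube_of C Q -> i <= size s -> connected (Q :&: prefix s i).
Proof.
move=> QC le_is; have [c cQ] := cube_of_nonempty QC; have [Y eQ QsubC] := cube_ofP QC cQ.
rewrite -(subKn le_is); elim: (size s - i) (leq_subr i (size s)) => [|k IH] lt_ks.
  by rewrite subn0 prefix_size sC (setIidPl QsubC) eQ; apply: cube_at_connected.
have lt_js : size s - k.+1 < size s by rewrite ltn_subrL (leq_trans _ lt_ks).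
move: IH; rewrite -(subnSK lt_ks) => /(_ (ltnW lt_ks)) IH.
rewrite (prefixS s_uniq lt_js) setIDA; apply: connected_setD1 IH _ => x y xy.
move=> /setIP [cxQ cxP] /setIP [cyQ cyP]; apply/setIP; split.
  by move: cxQ cyQ; rewrite eQ; apply: cube_at_square.
exact: corner_square (s_corner lt_js) cxP cyP.
Qed.

Lemma peel_order_unique_sinks : unique_sinks C (peel_order s).
Proof.
move=> Q QC; have [c cQ] := cube_of_nonempty QC.
have [m mQ mmin] : exists2 m, m \in Q & forall d, d \in Q -> index m s <= index d s.
  by case: (arg_minnP (fun d => index d s) cQ) => m; exists m.
have Qs d : d \in Q -> d \in s by move=> dQ; rewrite -(mem_enumeration _ sC) (subsetP QC.2).
apply/eqP/cards1P; exists m; apply/setP => v; rewrite !inE.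
apply/idP/eqP => [/andP [vQ /forall_inP vsink]|->]; last first.
  by rewrite /sink_in mQ; apply/forall_inP => u uQ; rewrite /peel_order -leqNgt mmin ?implybT.
set D := Q :&: prefix s (index v s).+1.
have inD d : d \in Q -> index d s <= index v s -> d \in D.
  by move=> dQ le_dv; rewrite inE dQ mem_prefix Qs.
have : D \subset [set v].
  apply: (prefix_cube_connected QC); first by rewrite index_mem Qs.
  - by rewrite sub1set inD ?leqnn.
  - by apply/set0Pn; exists v; rewrite set11.
  move=> a b /set1P -> /setIP [bQ]; rewrite mem_prefix ltnS => /andP [_ le_bv] vb.
  have := vsink b bQ; rewrite vb /= /peel_order -leqNgt => le_vb.
  apply/set1P/(index_inj set0 (Qs b bQ) (Qs v vQ))/eqP.
  by rewrite eqn_leq le_bv.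
by move/subsetP/(_ m (inD m mQ (mmin v vQ)))/set1P.
Qed.

End CornerPeeling.

Lemma corner_peeling_acyclic_USO C s : corner_peeling C s ->
  exists o, orientation C o /\ acyclic C o /\ USO C o.
Proof.
move=> [s_uniq [sC s_corner]]; exists (peel_order s).
split; first exact: peel_order_orientation.
split; first exact: peel_order_acyclic.
split; [exact: peel_order_outcube | exact: peel_order_unique_sinks].
Qed.

End Peeling.

Theorem proposition6p4 (T : finType) (C : {set {set T}}) :
  ample C ->
  (has_corner_peeling C <->
   exists o : rel {set T}, orientation C o /\ acyclic C o /\ USO C o).
Proof.
move=> _; split => [[s]|[o [oC [acyc usoC]]]].
  exact: corner_peeling_acyclic_USO.
exact: acyclic_USO_corner_peeling oC acyc usoC.
Qed.
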